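(* Let $k\in\{0,1,-1\}$, $c\neq0$, $m>0$ with $m\neq1$, $a_1\neq0$, $a_3$ real, $\hat a=(a_1,0,a_3)^T$, and consider the complex system $$\frac{d\hat K}{dt}=\hat K\times\omega(\hat K)+\hat P\times\hat a,\qquad \frac{d\hat P}{dt}=\hat P\times\omega(\hat K)+k\,(\hat K\times\hat a),\qquad \omega(\hat K)=\Big(\frac{m}{c}K_1,\frac{m}{c}K_2,\frac1cK_3\Big)^T.$$ Consider Laurent series solutions $\hat K(t)=t^{-1}\sum_{n\ge0}K_nt^n$, $\hat P(t)=t^{-2}\sum_{n\ge0}P_nt^n$ whose leading coefficients $K_0=(p_0,q_0,r_0)^T$, $P_0=(f_0,g_0,h_0)^T$ have $r_0=0$, i.e. $p_0=0$, $q_0=\frac{2\varepsilon ic}{m}$, $r_0=0$, $f_0=i\varepsilon h_0$, $g_0=0$, $h_0=\frac{2c}{m(a_3+\varepsilon ia_1)}$ with $\varepsilon=\pm1$. Then all such solutions (i.e. all solutions $(K_n,P_n)_{n\ge1}$ of the recursive relations obtained by equating coefficients of equal powers of $t$) are parametrized by at most four arbitrary complex constants; hence they do not provide a general (six-parameter) meromorphic solution of the system.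
   Context: $\times$ is the complex bilinear vector product on $\mathbb{C}^3$; time $t$ is complex. A general meromorphic solution means a family of such Laurent series solutions depending on six arbitrary complex constants (the dimension of the phase space), as is needed for meromorphic solutions on an open set of initial conditions in $\mathbb{C}^6$. *)

From HB Require Import structures.
From mathcomp Require Import all_boot all_order all_algebra.
From mathcomp Require Import complex.
Set Implicit Arguments. Unset Strict Implicit. Unset Printing Implicit Defensive.
Import Order.TTheory GRing.Theory Num.Theory.
Local Open Scope ring_scope.

Definition vec3 (C : Type) := (C * C * C)%type.

Section Vec.
Variable C : fieldType.

Definition v1 (u : vec3 C) : C := u.1.1.
Definition v2 (u : vec3 C) : C := u.1.2.
Definition v3 (u : vec3 C) : C := u.2.
Definition mkv (x y z : C) : vec3 C := (x, y, z).

Definition vadd (u v : vec3 C) : vec3 C := mkv (v1 u + v1 v) (v2 u + v2 v) (v3 u + v3 v).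
Definition vscale (s : C) (u : vec3 C) : vec3 C := mkv (s * v1 u) (s * v2 u) (s * v3 u).
Definition vzero : vec3 C := mkv 0 0 0.

Definition cross (u v : vec3 C) : vec3 C :=
  mkv (v2 u * v3 v - v3 u * v2 v)
      (v3 u * v1 v - v1 u * v3 v)
      (v1 u * v2 v - v2 u * v1 v).

Definition vsum (n : nat) (F : nat -> vec3 C) : vec3 C :=
  foldr vadd vzero [seq F i | i <- iota 0 n].

Definition omega (m c : C) (u : vec3 C) : vec3 C :=
  mkv (m / c * v1 u) (m / c * v2 u) (v3 u / c).

(* The recursive relations obtained by substituting
     K(t) = t^-1 \sum_{n>=0} Kc n t^n,   P(t) = t^-2 \sum_{n>=0} Pc n t^n
   into  dK/dt = K x omega(K) + P x a,  dP/dt = P x omega(K) + k (K x a)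
   and equating coefficients of t^(n-2) (first equation) and t^(n-3)
   (second equation), for every n >= 0. *)
Definition laurent_recursion (k m c : C) (a : vec3 C)
    (Kc Pc : nat -> vec3 C) : Prop :=
  forall n : nat,
    vscale (n%:R - 1) (Kc n) =
      vadd (vsum n.+1 (fun i => cross (Kc i) (omega m c (Kc (n - i)%N))))
           (cross (Pc n) a)
    /\
    vscale (n%:R - 2) (Pc n) =
      vadd (vsum n.+1 (fun i => cross (Pc i) (omega m c (Kc (n - i)%N))))
           (if (2 <= n)%N then vscale k (cross (Kc (n - 2)%N) a) else vzero).

Definition coef6 (Kc Pc : nat -> vec3 C) (n : nat) (j : 'I_6) : C :=
  match val j with
  | 0 => v1 (Kc n) | 1 => v2 (Kc n) | 2 => v3 (Kc n)
  | 3 => v1 (Pc n) | 4 => v2 (Pc n) | _ => v3 (Pc n)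
  end.
End Vec.

(* Two Laurent solutions with the same leading term that agree below order
   n > 0 differ at order n by a solution of the linearised (Kowalevski) system
   at n: the recursion is bilinear, and its k-term only involves K_(n-2).  For the leading term with r0 = 0 this system splits into two
   3x3 blocks, one in the 1st and 3rd coordinates of K_n and the 2nd of P_n,
   the other in the remaining ones, with determinants proportional to
   (n - 3) * resonance_poly n and (n - 2)(n - 4)(n + 1).  The roots of the
   monic quadratic resonance_poly sum to 1, so at most one of them is a
   positive integer n1.  Away from these resonances the kernel is trivial, and
   at a resonance it is cut out by the second coordinate of K_n (n = 2, 4) or
   of P_n (n = 3, n1), which leaves four free coefficients. *)

From HB Require Import structures.
From mathcomp Require Import all_boot all_order all_algebra.
From mathcomp Require Import complex ring zify.
From Stdlib Require Import Classical.

Set Implicit Arguments.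
Unset Strict Implicit.
Unset Printing Implicit Defensive.

Import Order.TTheory GRing.Theory Num.Theory.
Local Open Scope ring_scope.

Lemma big_nat_ends (V : zmodType) (n : nat) (F : nat -> V) :
  (0 < n)%N -> (forall i, (0 < i < n)%N -> F i = 0) ->
  \sum_(0 <= i < n.+1) F i = F 0%N + F n.
Proof.
move=> n_gt0 Fmid; rewrite big_nat_recr // big_ltn // big_nat_cond big1 => [|i].
  by rewrite /= addr0.
by move=> /andP[/andP[i_gt0 i_lt] _]; apply: Fmid; rewrite i_gt0.
Qed.

Lemma eq0_lincomb (R : pzRingType) (l1 r1 l2 r2 l3 r3 k1 k2 k3 z : R) :
  l1 = r1 -> l2 = r2 -> l3 = r3 ->
  z = k1 * (l1 - r1) + k2 * (l2 - r2) + k3 * (l3 - r3) -> z = 0.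
Proof. by move=> -> -> -> ->; rewrite !subrr !mulr0 !addr0. Qed.

Lemma sum_delta2 (R : pzSemiRingType) (J : finType) N t (j0 : J) (X : nat -> J -> R) :
  (t < N)%N -> \sum_(n < N) \sum_(j : J) ((n == t :> nat) && (j == j0))%:R * X n j = X t j0.
Proof.
move=> t_lt; rewrite (bigD1 (Ordinal t_lt)) //= [X in _ + X]big1 ?addr0 => [|i it].
  rewrite (bigD1 j0) //= !eqxx mul1r [X in _ + X]big1 ?addr0 // => j /negbTE ->.
  by rewrite andbF mul0r.
rewrite big1 // => j _; suff /negbTE -> : nat_of_ord i != t by rewrite mul0r.
by apply: contra_neq it => it; apply/val_inj.
Qed.

Section Linearization.
Variable C : fieldType.
Implicit Types (u v : vec3 C) (t : C).

Lemma vaddE u v : vadd u v = u + v. Proof. by []. Qed.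

Lemma v2B u v : v2 (u - v) = v2 u - v2 v. Proof. by []. Qed.

Lemma vec3_eq0 u : v1 u = 0 -> v2 u = 0 -> v3 u = 0 -> u = 0.
Proof. by case: u => [[? ?] ?]; rewrite /v1 /v2 /v3 /= => -> -> ->. Qed.

Lemma vsumE n (F : nat -> vec3 C) : vsum n F = \sum_(0 <= i < n) F i.
Proof.
rewrite /vsum /index_iota subn0.
by elim: (iota 0 n) => [|i r IH]; rewrite ?big_nil ?big_cons //= IH.
Qed.

Ltac vec3_ring := repeat case=> [[? ?] ?];
  rewrite /vscale /cross /omega /mkv /v1 /v2 /v3 /=; congr (_, _, _); cbn; ring.

Lemma vscaleBr t u v : vscale t u - vscale t v = vscale t (u - v).
Proof. by move: u v; vec3_ring. Qed.

Lemma crossBl u u' v : cross (u - u') v = cross u v - cross u' v.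
Proof. by move: u u' v; vec3_ring. Qed.

Lemma crossBr u v v' : cross u (v - v') = cross u v - cross u v'.
Proof. by move: u v v'; vec3_ring. Qed.

Lemma omegaB m c u v : omega m c (u - v) = omega m c u - omega m c v.
Proof. by move: u v; vec3_ring. Qed.

Lemma vsum_conv_diff m c (X X' Y Y' : nat -> vec3 C) n : (0 < n)%N ->
  (forall i, (i < n)%N -> X i = X' i) -> (forall i, (i < n)%N -> Y i = Y' i) ->
  vsum n.+1 (fun i => cross (X i) (omega m c (Y (n - i)%N)))
    - vsum n.+1 (fun i => cross (X' i) (omega m c (Y' (n - i)%N)))
  = cross (X 0%N) (omega m c (Y n - Y' n)) + cross (X n - X' n) (omega m c (Y 0%N)).
Proof.
move=> n_gt0 eqX eqY; rewrite !vsumE -sumrB big_nat_ends // => [|i /andP[i_gt0 i_lt]].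
  by rewrite subn0 subnn (eqX 0%N) // (eqY 0%N) // omegaB crossBr crossBl.
by rewrite eqX // eqY ?subrr // ltn_subrL i_gt0.
Qed.

Definition kowalevski_system m c (a K0 P0 : vec3 C) (n : nat) (d e : vec3 C) :=
  vscale (n%:R - 1) d = cross K0 (omega m c d) + cross d (omega m c K0) + cross e a /\
  vscale (n%:R - 2) e = cross P0 (omega m c d) + cross e (omega m c K0).

Lemma laurent_recursion_diff k m c a (Kc Pc Kc' Pc' : nat -> vec3 C) n : (0 < n)%N ->
  laurent_recursion k m c a Kc Pc -> laurent_recursion k m c a Kc' Pc' ->
  (forall i, (i < n)%N -> Kc i = Kc' i) -> (forall i, (i < n)%N -> Pc i = Pc' i) ->
  kowalevski_system m c a (Kc 0%N) (Pc 0%N) n (Kc n - Kc' n) (Pc n - Pc' n).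
Proof.
move=> n_gt0 rec rec' eqK eqP; have [eK eP] := rec n; have [eK' eP'] := rec' n.
split; rewrite -vscaleBr.
  by rewrite eK eK' !vaddE opprD addrACA vsum_conv_diff // -crossBl.
rewrite eP eP' !vaddE opprD addrACA vsum_conv_diff // (eqK (n - 2)%N) ?ltn_subrL ?n_gt0 //.
by rewrite subrr addr0.
Qed.
End Linearization.

Section LeadingTerm.
Variables (C : numFieldType) (s c m a1 a3 : C).
Hypotheses (s2 : s * s = -1) (c_neq0 : c != 0) (m_neq0 : m != 0) (m_neq1 : m != 1)
  (a1_neq0 : a1 != 0) (w_neq0 : a3 + s * a1 != 0) (w'_neq0 : a1 + s * a3 != 0).

Let s_neq0 : s != 0.
Proof. by apply: contra_eq_neq s2 => ->; rewrite mul0r eq_sym oppr_eq0 oner_eq0. Qed.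

Definition leading_K : vec3 C := mkv 0 (2 * s * c / m) 0.
Definition leading_P : vec3 C :=
  let h0 := 2 * c / (m * (a3 + s * a1)) in mkv (s * h0) 0 h0.
Definition resonance_poly (N : C) := N * N - N - 2 * s * a1 * (1 - m) / (m * (a3 + s * a1)).

Local Notation kowalevski := (kowalevski_system m c (mkv a1 0 a3) leading_K leading_P).

Lemma kowalevski_blockA n d e : kowalevski n d e ->
  [/\ (n%:R - 1) * v1 d = 2 * s * (1 - m) / m * v3 d + a3 * v2 e,
      (n%:R - 1) * v3 d = - a1 * v2 e
    & (n%:R - 2) * v2 e = 2 / (a3 + s * a1) * v1 d - 2 * s / (m * (a3 + s * a1)) * v3 d].
Proof.
case: d e => [[d1 d2] d3] [[e1 e2] e3] [eK eP].
move: (congr1 (@v1 _) eK) (congr1 (@v3 _) eK) (congr1 (@v2 _) eP).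
rewrite /leading_K /leading_P /vscale /cross /omega /mkv /v1 /v2 /v3 /=; cbn.
by move=> -> -> ->; split; field; rewrite ?c_neq0 ?m_neq0 ?w_neq0.
Qed.

Lemma kowalevski_blockB n d e : kowalevski n d e ->
  [/\ (n%:R - 1) * v2 d = a1 * v3 e - a3 * v1 e,
      (n%:R - 2) * v1 e = - (2 / (a3 + s * a1)) * v2 d - 2 * s * v3 e
    & (n%:R - 2) * v3 e = s * (2 / (a3 + s * a1)) * v2 d + 2 * s * v1 e].
Proof.
case: d e => [[d1 d2] d3] [[e1 e2] e3] [eK eP].
move: (congr1 (@v2 _) eK) (congr1 (@v1 _) eP) (congr1 (@v3 _) eP).
rewrite /leading_K /leading_P /vscale /cross /omega /mkv /v1 /v2 /v3 /=; cbn.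
by move=> -> -> ->; split; field; rewrite ?c_neq0 ?m_neq0 ?w_neq0.
Qed.

Section Blocks.
Variables (N d1 d2 d3 e1 e2 e3 : C).

Hypotheses (A1 : (N - 1) * d1 = 2 * s * (1 - m) / m * d3 + a3 * e2)
  (A2 : (N - 1) * d3 = - a1 * e2)
  (A3 : (N - 2) * e2 = 2 / (a3 + s * a1) * d1 - 2 * s / (m * (a3 + s * a1)) * d3).

Lemma blockA_resonance : (N - 3) * resonance_poly N * e2 = 0.
Proof.
apply: (eq0_lincomb A3 A1 A2 (k1 := (N - 1) ^+ 2) (k2 := 2 / (a3 + s * a1) * (N - 1))
  (k3 := 2 / (a3 + s * a1) * (2 * s * (1 - m) / m) - 2 * s / (m * (a3 + s * a1)) * (N - 1))).
by rewrite /resonance_poly; field; rewrite w_neq0 m_neq0.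
Qed.

Lemma blockA_eq0 : e2 = 0 -> d1 = 0 /\ d3 = 0.
Proof.
move=> e2_0.
have alpha_neq0 : 2 * s * (1 - m) / m != 0.
  by rewrite !mulf_neq0 ?invr_eq0 ?pnatr_eq0 // subr_eq0 eq_sym.
have d3_0 : d3 = 0.
  apply: (mulfI alpha_neq0); rewrite mulr0.
  apply: (eq0_lincomb A1 A2 A3 (k1 := -1) (k2 := s / m)
    (k3 := - ((N - 1) * (a3 + s * a1) / 2))).
  by rewrite e2_0; field; rewrite w_neq0 m_neq0.
split=> //; apply: (mulfI (_ : 2 / (a3 + s * a1) != 0)).
  by rewrite mulf_neq0 ?invr_eq0 ?pnatr_eq0.
by move: A3; rewrite e2_0 d3_0 !mulr0 subr0 => <-.
Qed.

Hypotheses (B1 : (N - 1) * d2 = a1 * e3 - a3 * e1)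
  (B2 : (N - 2) * e1 = - (2 / (a3 + s * a1)) * d2 - 2 * s * e3)
  (B3 : (N - 2) * e3 = s * (2 / (a3 + s * a1)) * d2 + 2 * s * e1).

(* In the unknowns e3 + s e1 and e3 - s e1 the equations B2 and B3 decouple. *)
Lemma blockB_resonance : (N - 2) * (N - 4) * (N + 1) * d2 = 0.
Proof.
apply: (eq0_lincomb B1 B2 B3 (k1 := N * (N - 4))
  (k2 := s / 2 * ((a1 + s * a3) * N + s * (a3 + s * a1) * (N - 4)))
  (k3 := ((a1 + s * a3) * N - s * (a3 + s * a1) * (N - 4)) / 2)).
by field: s2; rewrite w_neq0.
Qed.

Lemma blockB_eq0 : d2 = 0 -> e1 = 0 /\ e3 = 0.
Proof.
move=> d2_0.
have e3E : e3 = - (s * e1).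
  apply/eqP; rewrite -addr_eq0; apply/eqP.
  apply: (mulfI (_ : 4 * (a1 + s * a3) != 0)); first by rewrite mulf_neq0 ?pnatr_eq0.
  rewrite mulr0; apply: (eq0_lincomb B1 B2 B3 (k1 := - (2 * N))
    (k2 := - s * ((a3 + s * a1) * s + (a1 + s * a3))) (k3 := s * (a3 + s * a1) - (a1 + s * a3))).
  by rewrite d2_0; ring: s2.
have e1_0 : e1 = 0.
  apply: (mulfI w_neq0); rewrite mulr0.
  transitivity ((N - 1) * d2 - (a1 * e3 - a3 * e1)); first by rewrite d2_0 e3E; ring.
  by rewrite B1 subrr.
by rewrite e3E e1_0 mulr0 oppr0.
Qed.

End Blocks.

Lemma kowalevski_eq0 n d e : kowalevski n d e ->
  (n = 2%N \/ n = 4%N -> v2 d = 0) -> (n = 3%N \/ resonance_poly n%:R = 0 -> v2 e = 0) ->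
  d = 0 /\ e = 0.
Proof.
move=> sys resB resA.
have [A1 A2 A3] := kowalevski_blockA sys; have [B1 B2 B3] := kowalevski_blockB sys.
have e2_0 : v2 e = 0.
  move/eqP: (blockA_resonance A1 A2 A3); rewrite !mulf_eq0 subr_eq0.
  case/orP=> [/orP[n3|/eqP res0]|/eqP //]; apply: resA; last by right.
  by left; apply/eqP; rewrite -(eqr_nat C).
have d2_0 : v2 d = 0.
  move/eqP: (blockB_resonance B1 B2 B3); rewrite natr1 !mulf_eq0 pnatr_eq0 !subr_eq0 orbF.
  case/orP=> [/orP[n2|n4]|/eqP //]; apply: resB; [left|right];
    by apply/eqP; rewrite -(eqr_nat C).
have [d1_0 d3_0] := blockA_eq0 A1 A2 A3 e2_0.
have [e1_0 e3_0] := blockB_eq0 B1 B2 B3 d2_0.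
by split; apply: vec3_eq0.
Qed.

Lemma laurent_solutions_eq k (Kc Pc Kc' Pc' : nat -> vec3 C) :
  Kc 0%N = leading_K -> Pc 0%N = leading_P -> Kc' 0%N = leading_K -> Pc' 0%N = leading_P ->
  laurent_recursion k m c (mkv a1 0 a3) Kc Pc ->
  laurent_recursion k m c (mkv a1 0 a3) Kc' Pc' ->
  v2 (Kc 2%N) = v2 (Kc' 2%N) -> v2 (Kc 4%N) = v2 (Kc' 4%N) -> v2 (Pc 3%N) = v2 (Pc' 3%N) ->
  (forall n, (0 < n)%N -> resonance_poly n%:R = 0 -> v2 (Pc n) = v2 (Pc' n)) ->
  forall n, Kc n = Kc' n /\ Pc n = Pc' n.
Proof.
move=> K0 P0 K0' P0' rec rec' eqK2 eqK4 eqP3 eqPres n.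
elim/ltn_ind: n => -[_|n IH]; first by rewrite K0 K0' P0 P0'.
have := laurent_recursion_diff (ltn0Sn n) rec rec' (fun i lt => (IH i lt).1)
  (fun i lt => (IH i lt).2).
rewrite K0 P0 => /kowalevski_eq0 [| |/subr0_eq -> /subr0_eq ->] //.
  by case=> ->; rewrite v2B ?eqK2 ?eqK4 subrr.
by case=> [->|res0]; rewrite v2B ?eqP3 ?eqPres ?subrr.
Qed.

Lemma resonance_root_uniq n n' : (0 < n)%N -> (0 < n')%N ->
  resonance_poly n%:R = 0 -> resonance_poly n'%:R = 0 -> n = n'.
Proof.
move=> n_gt0 n'_gt0 res0 res0'.
have : (n%:R - n'%:R) * (n + n' - 1)%:R = 0 :> C.
  rewrite natrB ?natrD; last by rewrite addn_gt0 n_gt0.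
  by rewrite -[RHS](subrr (resonance_poly n%:R)) {2}res0 -res0' /resonance_poly; ring.
move/eqP; rewrite mulf_eq0 pnatr_eq0 subr_eq0 eqr_nat => /orP[/eqP //|].
by rewrite subn_eq0 leqNgt -addn1 leq_add.
Qed.

Lemma four_coefs_determine_laurent_solution k :
  exists (N : nat) (w : 'I_4 -> 'I_N -> 'I_6 -> C),
    forall Kc Pc Kc' Pc' : nat -> vec3 C,
      Kc 0%N = leading_K -> Pc 0%N = leading_P ->
      Kc' 0%N = leading_K -> Pc' 0%N = leading_P ->
      laurent_recursion k m c (mkv a1 0 a3) Kc Pc ->
      laurent_recursion k m c (mkv a1 0 a3) Kc' Pc' ->
      (forall l : 'I_4,
         \sum_(n < N) \sum_(j < 6) w l n j * coef6 Kc Pc n j =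
         \sum_(n < N) \sum_(j < 6) w l n j * coef6 Kc' Pc' n j) ->
      forall n : nat, Kc n = Kc' n /\ Pc n = Pc' n.
Proof.
have [n1 res_n1] : exists n1, forall n, (0 < n)%N -> resonance_poly n%:R = 0 -> n = n1.
  case: (classic (exists n1, (0 < n1)%N /\ resonance_poly n1%:R = 0)) => [[n1 [n1_gt0 r1]]|none].
    by exists n1 => n n_gt0 r; apply: resonance_root_uniq.
  by exists 0%N => n n_gt0 r; case: none; exists n.
pose t (l : 'I_4) := nth 0%N [:: 2; 4; 3; n1]%N l.
(* coordinates 1 and 4 of [coef6] are [v2 (Kc n)] and [v2 (Pc n)] *)
pose j (l : 'I_4) : 'I_6 := if (l < 2)%N then Ordinal (isT : (1 < 6)%N)
                            else Ordinal (isT : (4 < 6)%N).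
exists (n1 + 5)%N, (fun l n i => ((n == t l :> nat) && (i == j l))%:R).
move=> Kc Pc Kc' Pc' K0 P0 K0' P0' rec rec' eqw.
have coef_eq l : coef6 Kc Pc (t l) (j l) = coef6 Kc' Pc' (t l) (j l).
  have t_lt : (t l < n1 + 5)%N by rewrite /t; case: l => -[|[|[|[|]]]] //= ?; lia.
  by have := eqw l; rewrite !sum_delta2.
apply: (laurent_solutions_eq K0 P0 K0' P0' rec rec' (coef_eq 0) (coef_eq 1) (coef_eq 2)).
by move=> n n_gt0 r; rewrite (res_n1 n n_gt0 r); apply: (coef_eq 3).
Qed.

End LeadingTerm.

Local Open Scope complex_scope.

Lemma add_sqrtN1_mul_real_eq0 (R : rcfType) (s : R[i]) (x y : R) :
  s * s = -1 -> x%:C + s * y%:C = 0 -> x = 0 /\ y = 0.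
Proof.
move=> s2 xy0; have : (x ^+ 2 + y ^+ 2)%:C = 0 :> R[i].
  rewrite rmorphD !rmorphXn /=.
  transitivity ((x%:C + s * y%:C) * (x%:C - s * y%:C)); first by ring: s2.
  by rewrite xy0 mul0r.
move/eqP; rewrite fmorph_eq0 paddr_eq0 ?sqr_ge0 // !sqrf_eq0.
by case/andP=> /eqP -> /eqP ->.
Qed.

Theorem theorem2 (R : rcfType) (k : int) (c m a1 a3 : R) (eps : int) :
  (k = 0 \/ k = 1 \/ k = -1) ->
  c != 0 -> 0 < m -> m != 1 -> a1 != 0 ->
  (eps = 1 \/ eps = -1) ->
  let C := R[i] in
  let a : vec3 C := mkv (a1%:C)%C 0 (a3%:C)%C in
  let h0 : C := (2 * c%:C / (m%:C * (a3%:C + eps%:~R * 'i * a1%:C)))%C in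
  let K0 : vec3 C := mkv 0 ((2 * eps%:~R * 'i * c%:C) / m%:C)%C 0 in
  let P0 : vec3 C := mkv ('i * eps%:~R * h0)%C 0 h0 in
  exists (N : nat) (w : 'I_4 -> 'I_N -> 'I_6 -> C),
    forall Kc Pc Kc' Pc' : nat -> vec3 C,
      Kc 0%N = K0 -> Pc 0%N = P0 -> Kc' 0%N = K0 -> Pc' 0%N = P0 ->
      laurent_recursion (k%:~R) (m%:C)%C (c%:C)%C a Kc Pc ->
      laurent_recursion (k%:~R) (m%:C)%C (c%:C)%C a Kc' Pc' ->
      (forall l : 'I_4,
         \sum_(n < N) \sum_(j < 6) w l n j * coef6 Kc Pc n j =
         \sum_(n < N) \sum_(j < 6) w l n j * coef6 Kc' Pc' n j) ->
      forall n : nat, Kc n = Kc' n /\ Pc n = Pc' n.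
Proof.
move=> _ c_neq0 m_gt0 m_neq1 a1_neq0 eps_pm1 C a h0 K0 P0.
pose s : R[i] := eps%:~R * 'i.
have s2 : s * s = -1.
  have eps2 : eps * eps = 1 by case: eps_pm1 => ->.
  by rewrite /s mulrACA -intrM eps2 mul1r -expr2 sqr_i.
have realC_neq0 (x : R) : x != 0 -> x%:C != 0 :> R[i] by rewrite fmorph_eq0.
have m_neq1' : m%:C != 1 :> R[i].
  by rewrite -(rmorph1 (real_complex R)) (inj_eq (@complexI R)).
have w_neq0 : a3%:C + s * a1%:C != 0.
  by apply: contra_neq a1_neq0 => /(add_sqrtN1_mul_real_eq0 s2) [].
have w'_neq0 : a1%:C + s * a3%:C != 0.
  by apply: contra_neq a1_neq0 => /(add_sqrtN1_mul_real_eq0 s2) [].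
have [N [w sol]] := four_coefs_determine_laurent_solution s2 (realC_neq0 c c_neq0)
  (realC_neq0 m (lt0r_neq0 m_gt0)) m_neq1' (realC_neq0 a1 a1_neq0) w_neq0 w'_neq0 (k%:~R).
have -> : K0 = leading_K s c%:C m%:C by rewrite /K0 /leading_K mulrA.
have -> : P0 = leading_P s c%:C m%:C a1%:C a3%:C by rewrite /P0 /leading_P (mulrC 'i).
by exists N, w.
Qed.
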